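(* Let $b\ge2$, $c_{\mathrm{ov}}\ge0$, $c_i>0$, $c_i^\sharp\ge0$ ($i\in[b]$), and $d_j:=c_{\mathrm{ov}}+\sum_{i\ge j}(c_i+c_i^\sharp)$, so that $d_1>d_2>\cdots>d_b$. Let $L^0_{i,\{s,\dots,b\}}>0$ ($1\le s\le i\le b$) satisfy $L^0_{i,\{1,\dots,b\}}\ge L^0_{i,\{2,\dots,b\}}\ge\cdots\ge L^0_{i,\{i,\dots,b\}}$ for each $i$, and set $\delta_{i,s}:=1/(2L^0_{i,\{s,\dots,b\}})$, so $\delta_{i,1}\le\delta_{i,2}\le\cdots\le\delta_{i,i}$. Consider the linear program $$\min_{q\in\mathbb R^b}\ \sum_{j=1}^bd_jq_j\quad\text{s.t.}\quad q_1,\dots,q_b\ge0,\qquad\sum_{s=1}^i\delta_{i,s}q_s\ge1\ \ (i\in[b]).$$ Let $q$ be an optimal point and fix $i\in[b-1]$. If $\sum_{s=1}^i\delta_{i,s}q_s>1$, then $q_i=0$. Equivalently, $q_i>0$ implies $\sum_{s=1}^i\delta_{i,s}q_s=1$.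
   Context: The constants $L^0_{i,\{s,\dots,b\}}$ are the layer-wise smoothness constants for the randomized progressive training supports $\{s,\dots,b\}$; the monotonicity in $s$ is the choice permitted by nestedness of these sets. This program is an equivalent reformulation of minimizing the expected cost of randomized progressive training over the probabilities $p_s$. *)

(* Indices [b] = {1,...,b} are represented by 'I_b = {0,...,b-1}. *)
From mathcomp Require Import all_boot all_order all_algebra.
Set Implicit Arguments. Unset Strict Implicit. Unset Printing Implicit Defensive.
Import Order.TTheory GRing.Theory Num.Theory.
Local Open Scope ring_scope.

Section LP.
Variables (R : realFieldType) (b : nat).

Definition dcost (cov : R) (c cs : 'I_b -> R) (j : 'I_b) : R :=
  cov + \sum_(i : 'I_b | (j <= i)%N) (c i + cs i).

(* delta_{i,s} := 1 / (2 L^0_{i,{s..b}}) ; L i s stands for L^0_{i,{s,...,b}} *)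
Definition delta (L : 'I_b -> 'I_b -> R) (i s : 'I_b) : R := 1 / (2 * L i s).

Definition constr_sum (L : 'I_b -> 'I_b -> R) (q : 'I_b -> R) (i : 'I_b) : R :=
  \sum_(s : 'I_b | (s <= i)%N) delta L i s * q s.

Definition lp_feasible (L : 'I_b -> 'I_b -> R) (q : 'I_b -> R) : Prop :=
  (forall j, 0 <= q j) /\ (forall i, 1 <= constr_sum L q i).

Definition lp_objective (cov : R) (c cs : 'I_b -> R) (q : 'I_b -> R) : R :=
  \sum_(j : 'I_b) dcost cov c cs j * q j.

Definition lp_optimal (cov : R) (c cs : 'I_b -> R) (L : 'I_b -> 'I_b -> R)
    (q : 'I_b -> R) : Prop :=
  lp_feasible L q /\
  forall q', lp_feasible L q' -> lp_objective cov c cs q <= lp_objective cov c cs q'.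

End LP.

From mathcomp Require Import all_boot all_order all_algebra.
From mathcomp Require Import zify ring lra.
Import Order.TTheory GRing.Theory Num.Theory.
Local Open Scope ring_scope.

(* If the i-th constraint had slack while q_i > 0, moving a little mass from
   q_i to q_{i+1} would keep every constraint: constraint i only loses a small
   part of its slack, constraints j > i gain because delta_{j,i} <= delta_{j,i+1},
   and constraints j < i do not see either coordinate.  Since d_{i+1} < d_i the
   objective strictly decreases, contradicting optimality. *)

Section MassShift.
Context {R : realFieldType} {b : nat}.
Implicit Types (cov e : R) (q F c cs : 'I_b -> R) (P : pred 'I_b).

Definition shift_mass q (e : R) (a a' : 'I_b) (k : 'I_b) : R :=
  q k + e * ((k == a')%:R - (k == a)%:R).

Lemma sum_mul_eq F P (a : 'I_b) :
  \sum_(k | P k) F k * (k == a)%:R = if P a then F a else 0.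
Proof.
under eq_bigr => k _ do rewrite mulr_natr mulrb.
rewrite -big_mkcondr /=; case: ifP => Pa.
  by apply: big_pred1 => k /=; case: (eqVneq k a) => [->|]; rewrite ?Pa ?andbF.
by rewrite big_pred0 // => k; case: (eqVneq k a) => [->|]; rewrite ?Pa ?andbF.
Qed.

Lemma sum_shift_mass F P q e a a' :
  \sum_(k | P k) F k * shift_mass q e a a' k =
  \sum_(k | P k) F k * q k
    + e * ((if P a' then F a' else 0) - (if P a then F a else 0)).
Proof.
rewrite -!sum_mul_eq -sumrB mulr_sumr -big_split /=.
by apply: eq_bigr => k _; rewrite /shift_mass; ring.
Qed.

Lemma objective_shift_mass cov c cs q e a a' :
  lp_objective cov c cs (shift_mass q e a a') =
  lp_objective cov c cs q + e * (dcost cov c cs a' - dcost cov c cs a).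
Proof. exact: sum_shift_mass. Qed.

Lemma dcost_succ cov c cs (j j' : 'I_b) : j' = j.+1 :> nat ->
  dcost cov c cs j = dcost cov c cs j' + (c j + cs j).
Proof.
move=> j'E; rewrite /dcost (bigD1 j) //= (eq_bigl (fun k : 'I_b => j' <= k)%N).
  by lra.
by move=> k; rewrite j'E -val_eqE /=; lia.
Qed.

Lemma dcost_succ_lt cov c cs (j j' : 'I_b) :
  0 < c j -> 0 <= cs j -> j' = j.+1 :> nat ->
  dcost cov c cs j' < dcost cov c cs j.
Proof. by move=> cj csj /(dcost_succ cov c cs) ->; rewrite ltrDl ltr_wpDr. Qed.

Context {L : 'I_b -> 'I_b -> R}.
Hypothesis L_gt0 : forall i s : 'I_b, (s <= i)%N -> 0 < L i s.
Hypothesis L_antitone :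
  forall i s s' : 'I_b, (s <= s')%N -> (s' <= i)%N -> L i s' <= L i s.

Lemma delta_gt0 (i s : 'I_b) : (s <= i)%N -> 0 < delta L i s.
Proof. by move=> si; rewrite /delta mul1r invr_gt0 mulr_gt0 ?L_gt0. Qed.

Lemma delta_monotone (i s s' : 'I_b) :
  (s <= s')%N -> (s' <= i)%N -> delta L i s <= delta L i s'.
Proof.
move=> ss' s'i; have si := leq_trans ss' s'i.
rewrite /delta !mul1r lef_pV2 ?posrE ?mulr_gt0 ?L_gt0 //.
by rewrite ler_pM2l ?L_antitone.
Qed.

Lemma shift_mass_feasible q e (a a' : 'I_b) :
  lp_feasible L q -> a' = a.+1 :> nat -> 0 <= e -> e <= q a ->
  e * delta L a a <= constr_sum L q a - 1 ->
  lp_feasible L (shift_mass q e a a').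
Proof.
move=> [q_ge0 q_sat] a'E e_ge0 e_le slack.
have aa' : (a == a') = false by rewrite -val_eqE /= a'E ltn_eqF.
split=> [k|j].
  rewrite /shift_mass; case: (eqVneq k a) => [->|_]; first by rewrite aa' /=; lra.
  by have := q_ge0 k; case: (k == a') => /=; lra.
rewrite /constr_sum sum_shift_mass -/(constr_sum L q j).
have := q_sat j; case: (ltngtP j a) => ja.
- have -> : (a' <= j)%N = false by lia.
  by rewrite subrr mulr0 addr0.
- have -> : (a' <= j)%N by lia.
  have hd : delta L j a <= delta L j a' by apply: delta_monotone; lia.
  have : 0 <= e * (delta L j a' - delta L j a) by rewrite mulr_ge0 ?subr_ge0.
  lra.
- have -> : j = a by apply: val_inj.
  rewrite ifF; [lra | lia].
Qed.

End MassShift.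

Theorem lemma2 (R : realFieldType) (b : nat) (hb : (2 <= b)%N)
    (cov : R) (c cs : 'I_b -> R) (L : 'I_b -> 'I_b -> R)
    (hcov : 0 <= cov)
    (hc : forall i, 0 < c i)
    (hcs : forall i, 0 <= cs i)
    (hLpos : forall i s : 'I_b, (s <= i)%N -> 0 < L i s)
    (hLmono : forall i s s' : 'I_b, (s <= s')%N -> (s' <= i)%N -> L i s' <= L i s)
    (q : 'I_b -> R) (hq : lp_optimal cov c cs L q)
    (i : 'I_b) (hi : (i.+1 < b)%N) :
  1 < constr_sum L q i -> q i = 0.
Proof.
move=> slack; case: hq => [feas opt]; have [q_ge0 _] := feas.
have := q_ge0 i; rewrite le_eqVlt => /orP[/eqP -> //|qi_gt0]; exfalso.
pose i' : 'I_b := Ordinal hi.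
have dii_gt0 : 0 < delta L i i by apply: (delta_gt0 hLpos).
pose e := Num.min (q i) ((constr_sum L q i - 1) / delta L i i).
have e_gt0 : 0 < e by rewrite lt_min qi_gt0 divr_gt0 // subr_gt0.
have e_le : e <= q i by rewrite ge_min lexx.
have e_slack : e * delta L i i <= constr_sum L q i - 1.
  by rewrite -ler_pdivlMr // ge_min lexx orbT.
have feas' : lp_feasible L (shift_mass q e i i').
  by apply: (shift_mass_feasible hLpos hLmono) => //; apply: ltW.
have d_lt : dcost cov c cs i' < dcost cov c cs i by apply: dcost_succ_lt.
have := opt _ feas'.
by rewrite objective_shift_mass lerDl pmulr_rge0 // subr_ge0 leNgt d_lt.
Qed.
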